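(* Let $X\subseteq Y$ with $|Y\setminus X|\ge|X|$. Then $\tau_{pp}$ is the only Hausdorff topology $\tau$ on $I(X)$ making $I(X)$ a topological inverse semigroup for which the map $\pi:S_\infty(Y)\to(I(X),\tau)$, $\pi(f)=\widehat f$, is continuous (with $S_\infty(Y)$ carrying the pointwise convergence topology, $Y$ discrete).
   Context: $S_\infty(Y)$ is the group of all bijections $Y\to Y$. $I(X)$ is the set of all bijections $f:A\to B$ with $A,B\subseteq X$ (including the empty map), $\mathrm{dom}(f)=A$, $\mathrm{im}(f)=B$, with composition $\mathrm{dom}(f\circ g)=g^{-1}(\mathrm{dom}(f)\cap\mathrm{im}(g))$ and inversion $f\mapsto f^{-1}$. For $f\in S_\infty(Y)$, $\widehat f$ is the restriction of $f$ to $X\cap f^{-1}(X)$. For $x,y\in X$: $v(x,y)=\{f: x\in\mathrm{dom}(f), f(x)=y\}$, $w_1(x)=\{f: x\notin\mathrm{dom}(f)\}$, $w_2(y)=\{f: y\notin\mathrm{im}(f)\}$; $\tau_{pp}$ is the topology generated by all these sets. A topological inverse semigroup has continuous multiplication and inversion. *)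

From Stdlib Require Import Classical ClassicalEpsilon.
Set Implicit Arguments.

Definition set (T : Type) := T -> Prop.

Section Top.
Variable T : Type.

Definition is_topology (O : set (set T)) : Prop :=
  O (fun _ => True) /\
  (forall F : set (set T), (forall U, F U -> O U) ->
      O (fun x => exists U, F U /\ U x)) /\
  (forall U V, O U -> O V -> O (fun x => U x /\ V x)).

Definition generated_topology (S : set (set T)) : set (set T) :=
  fun U => forall O, is_topology O -> (forall V, S V -> O V) -> O U.

Definition hausdorff (O : set (set T)) : Prop :=
  forall x y, x <> y -> exists U V, O U /\ O V /\ U x /\ V y /\
    (forall z, U z -> V z -> False).
End Top.

Definition continuous {A B : Type} (OA : set (set A)) (OB : set (set B))
  (f : A -> B) : Prop :=
  forall V, OB V -> OA (fun a => V (f a)).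

Definition product_topology {A B : Type} (OA : set (set A)) (OB : set (set B))
  : set (set (A * B)) :=
  generated_topology (fun W => exists U V, OA U /\ OB V /\
    (forall p, W p <-> (U (fst p) /\ V (snd p)))).

Section IX.
Variable Y : Type.
Variable X : set Y.

(** A partial map [f] on Y (domain = {a | f a <> None}) is an element of I(X):
    a bijection between its domain and its image, both subsets of X. *)
Definition is_pbij (f : Y -> option Y) : Prop :=
  (forall a b, f a = Some b -> X a /\ X b) /\
  (forall a a' b, f a = Some b -> f a' = Some b -> a = a').

Definition IX := {f : Y -> option Y | is_pbij f}.

(** composition f∘g : first g, then f; dom = g^{-1}(dom f ∩ im g) *)
Definition pcomp_fun (f g : Y -> option Y) : Y -> option Y :=
  fun a => match g a with Some b => f b | None => None end.

Lemma pcomp_pbij f g : is_pbij f -> is_pbij g -> is_pbij (pcomp_fun f g).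
Proof.
  intros [Hf1 Hf2] [Hg1 Hg2]; unfold pcomp_fun; split.
  - intros a b H; destruct (g a) as [c|] eqn:E; [|discriminate].
    split; [exact (proj1 (Hg1 _ _ E)) | exact (proj2 (Hf1 _ _ H))].
  - intros a a' b H H'.
    destruct (g a) as [c|] eqn:E; [|discriminate].
    destruct (g a') as [c'|] eqn:E'; [|discriminate].
    assert (c = c') by (exact (Hf2 _ _ _ H H')); subst c'.
    exact (Hg2 _ _ _ E E').
Qed.

Definition pmul (f g : IX) : IX :=
  exist _ (pcomp_fun (proj1_sig f) (proj1_sig g))
    (pcomp_pbij (proj2_sig f) (proj2_sig g)).

Definition pinv_fun (f : Y -> option Y) (b : Y) : option Y :=
  match excluded_middle_informative (exists a, f a = Some b) with
  | left H => Some (proj1_sig (constructive_indefinite_description _ H))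
  | right _ => None
  end.

Lemma pinv_fun_spec f a b : pinv_fun f b = Some a -> f a = Some b.
Proof.
  unfold pinv_fun.
  destruct (excluded_middle_informative _) as [H|H]; [|discriminate].
  destruct (constructive_indefinite_description _ H) as [c Hc]; simpl.
  intros E; injection E; intros; subst; exact Hc.
Qed.

Lemma pinv_pbij f : is_pbij f -> is_pbij (pinv_fun f).
Proof.
  intros [H1 H2]; split.
  - intros a b H; apply pinv_fun_spec in H; destruct (H1 _ _ H); split; auto.
  - intros a a' b H H'; apply pinv_fun_spec in H; apply pinv_fun_spec in H'.
    congruence.
Qed.

Definition pinv (f : IX) : IX :=
  exist _ (pinv_fun (proj1_sig f)) (pinv_pbij (proj2_sig f)).

Definition topological_inverse_semigroup (tau : set (set IX)) : Prop :=
  continuous (product_topology tau tau) tau (fun p => pmul (fst p) (snd p)) /\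
  continuous tau tau pinv.

Definition v_set (x y : Y) : set IX := fun f => proj1_sig f x = Some y.
Definition w1_set (x : Y) : set IX := fun f => proj1_sig f x = None.
Definition w2_set (y : Y) : set IX := fun f => forall a, proj1_sig f a <> Some y.

Definition tau_pp : set (set IX) :=
  generated_topology (fun U =>
    (exists x y, X x /\ X y /\ U = v_set x y) \/
    (exists x, X x /\ U = w1_set x) \/
    (exists y, X y /\ U = w2_set y)).
End IX.

Record perm (Y : Type) := Perm {
  pfun : Y -> Y;
  pinvfun : Y -> Y;
  pfunK : forall y, pinvfun (pfun y) = y;
  pinvfunK : forall y, pfun (pinvfun y) = y }.

(** pointwise convergence topology, Y discrete: subbase {f | f y = z} *)
Definition pointwise_top (Y : Type) : set (set (perm Y)) :=
  generated_topology (fun U => exists y z, forall s, U s <-> pfun s y = z).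

Definition hat_fun (Y : Type) (X : set Y) (s : perm Y) : Y -> option Y :=
  fun a => if excluded_middle_informative (X a /\ X (pfun s a))
           then Some (pfun s a) else None.

Lemma hat_pbij (Y : Type) (X : set Y) (s : perm Y) : is_pbij X (hat_fun X s).
Proof.
  unfold hat_fun; split.
  - intros a b; destruct (excluded_middle_informative _) as [[H1 H2]|H];
      [|discriminate].
    intros E; injection E; intros; subst; auto.
  - intros a a' b.
    destruct (excluded_middle_informative (X a /\ _)); [|discriminate].
    destruct (excluded_middle_informative (X a' /\ _)); [|discriminate].
    intros E E'; injection E; injection E'; intros; subst.
    rewrite <- (pfunK s a), <- (pfunK s a'); congruence.
Qed.

Definition hat (Y : Type) (X : set Y) (s : perm Y) : IX X :=
  exist _ (hat_fun X s) (hat_pbij X s).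

(** |X| <= |Y \ X| : an injection from X into Y \ X *)
Definition card_le_compl (Y : Type) (X : set Y) : Prop :=
  exists h : Y -> Y, (forall x, X x -> ~ X (h x)) /\
    (forall x x', X x -> X x' -> h x = h x' -> x = x').

Arguments tau_pp {Y} X.
Arguments v_set {Y} X x y.
Arguments w1_set {Y} X x.
Arguments w2_set {Y} X y.

From Stdlib Require Import Classical ClassicalEpsilon FunctionalExtensionality PropExtensionality.

(** Existence: tau_pp is Hausdorff (distinct partial bijections differ at a
    point, which subbasic sets detect), multiplication and inversion are
    continuous (preimages of subbasic sets are unions of open rectangles,
    resp. subbasic sets again), and so is the restriction map
    [hat X : S_oo(Y) -> I(X)].

    Uniqueness, for a Hausdorff inverse-semigroup topology tau making [hat X]
    continuous:
    - tau_pp is contained in tau, because each subbasic set is the locus where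
      a continuous map built from products with matrix units and inverses
      takes one of exactly two distinct values;
    - tau is contained in tau_pp, because an injection of X into Y \ X gives a
      tau_pp-continuous section [extend] of [hat X], and then every tau-open U
      equals the tau_pp-open set [extend^-1 (hat^-1 U)]. *)

Lemma set_ext {T : Type} (U V : set T) : (forall x, U x <-> V x) -> U = V.
Proof.
  intros H; apply functional_extensionality; intros x.
  apply propositional_extensionality; auto.
Qed.

Lemma open_ext {T : Type} (O : set (set T)) (U V : set T) :
  O U -> (forall x, U x <-> V x) -> O V.
Proof. intros H E; rewrite <- (set_ext U V E); exact H. Qed.

Section TopologyFacts.
Variables (T : Type) (O : set (set T)).
Hypothesis HO : is_topology O.

Lemma open_full : O (fun _ => True).
Proof. exact (proj1 HO). Qed.

Lemma open_inter (U V : set T) : O U -> O V -> O (fun x => U x /\ V x).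
Proof. exact (proj2 (proj2 HO) U V). Qed.

Lemma open_union {I : Type} (P : I -> Prop) (W : I -> set T) :
  (forall i, P i -> O (W i)) -> O (fun t => exists i, P i /\ W i t).
Proof.
  intros HW.
  apply (open_ext O (fun t => exists U, (fun U => exists i, P i /\ U = W i) U /\ U t)).
  - apply (proj1 (proj2 HO)); intros U [i [Pi ->]]; auto.
  - intros t; split.
    + intros [U [[i [Pi ->]] Ht]]; eauto.
    + intros [i [Pi Ht]]; exists (W i); eauto.
Qed.

Lemma open_empty : O (fun _ => False).
Proof.
  apply (open_ext O (fun t => exists i : False, True /\ True)).
  - apply open_union; intros [].
  - intros t; split; [intros [[] _] | intros []].
Qed.

Lemma open_union2 (U V : set T) : O U -> O V -> O (fun x => U x \/ V x).
Proof.
  intros HU HV.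
  apply (open_ext O (fun t => exists b : bool, True /\ (if b then U else V) t)).
  - apply open_union; intros [|] _; auto.
  - intros t; split.
    + intros [[|] [_ H]]; auto.
    + intros [H|H]; [exists true | exists false]; auto.
Qed.

Lemma open_decide (Q : Prop) : O (fun _ => Q).
Proof.
  destruct (classic Q) as [q|q].
  - apply (open_ext O _ _ open_full); intuition.
  - apply (open_ext O _ _ open_empty); intuition.
Qed.

(** In a Hausdorff space, if a continuous self-map takes the value [P] on [R]
    and a different value [Q] off [R], then [R] is open: it is the preimage
    of a neighbourhood of [P] missing [Q]. *)
Lemma hausdorff_two_valued_open (phi : T -> T) (P Q : T) (R : set T) :
  hausdorff O -> continuous O O phi -> P <> Q ->
  (forall t, R t -> phi t = P) -> (forall t, ~ R t -> phi t = Q) -> O R.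
Proof.
  intros Hhaus Hphi PQ HP HQ.
  destruct (Hhaus P Q PQ) as [U [V [HU [HV [UP [VQ D]]]]]].
  apply (open_ext _ _ _ (Hphi U HU)); intros t; split.
  - intros Ut; apply NNPP; intros N; rewrite (HQ t N) in Ut; exact (D Q Ut VQ).
  - intros Rt; rewrite (HP t Rt); exact UP.
Qed.
End TopologyFacts.

Arguments open_full {T O}.
Arguments open_inter {T O}.
Arguments open_union {T O} HO {I}.
Arguments open_empty {T O}.
Arguments open_union2 {T O}.
Arguments open_decide {T O}.
Arguments hausdorff_two_valued_open {T O}.

Lemma generated_is_topology {T : Type} (S : set (set T)) :
  is_topology (generated_topology S).
Proof.
  split; [|split].
  - intros O HO _; exact (open_full HO).
  - intros F HF O HO HS; apply (proj1 (proj2 HO)); intros U HU; exact (HF U HU O HO HS).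
  - intros U V HU HV O HO HS; exact (open_inter HO _ _ (HU O HO HS) (HV O HO HS)).
Qed.

Lemma generated_subbase_open {T : Type} (S : set (set T)) (V : set T) :
  S V -> generated_topology S V.
Proof. intros H O _ HS; auto. Qed.

(** Continuity into a generated topology need only be checked on the subbase:
    the sets whose preimage is open form a topology. *)
Lemma continuous_into_generated {A B : Type} (OA : set (set A)) (S : set (set B))
  (f : A -> B) :
  is_topology OA -> (forall V, S V -> OA (fun a => V (f a))) ->
  continuous OA (generated_topology S) f.
Proof.
  intros HA HS V HV; apply HV; auto; split; [|split].
  - exact (open_full HA).
  - intros F HF.
    apply (open_ext OA (fun a => exists i, F i /\ i (f a))); [|tauto].
    exact (open_union HA F (fun i a => i (f a)) HF).
  - intros U W HU HW; exact (open_inter HA _ _ HU HW).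
Qed.

Lemma product_rectangle_open {A B : Type} (OA : set (set A)) (OB : set (set B))
  (U : set A) (V : set B) :
  OA U -> OB V -> product_topology OA OB (fun p => U (fst p) /\ V (snd p)).
Proof. intros HU HV; apply generated_subbase_open; exists U, V; tauto. Qed.

Lemma continuous_pair {A B C : Type} (OA : set (set A)) (OB : set (set B))
  (OC : set (set C)) (p : A -> B) (q : A -> C) :
  is_topology OA -> continuous OA OB p -> continuous OA OC q ->
  continuous OA (product_topology OB OC) (fun a => (p a, q a)).
Proof.
  intros HA Hp Hq; apply continuous_into_generated; auto.
  intros W [U [V [HU [HV E]]]].
  apply (open_ext _ _ _ (open_inter HA _ _ (Hp U HU) (Hq V HV))).
  intros a; rewrite E; tauto.
Qed.

Lemma pinv_fun_some {Y : Type} (f : Y -> option Y) (a b : Y) :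
  (forall a a' b, f a = Some b -> f a' = Some b -> a = a') ->
  (pinv_fun f b = Some a <-> f a = Some b).
Proof.
  intros Hinj; split; [apply pinv_fun_spec|].
  intros E; unfold pinv_fun.
  destruct (excluded_middle_informative _) as [H|H].
  - destruct (constructive_indefinite_description _ H) as [c Hc]; simpl.
    f_equal; exact (Hinj _ _ _ Hc E).
  - exfalso; apply H; eauto.
Qed.

Lemma pinv_fun_none {Y : Type} (f : Y -> option Y) (b : Y) :
  pinv_fun f b = None <-> forall a, f a <> Some b.
Proof.
  unfold pinv_fun; destruct (excluded_middle_informative _) as [[a Ha]|H]; split.
  - discriminate.
  - intros K; destruct (K a Ha).
  - intros _ a Ha; apply H; eauto.
  - auto.
Qed.

Section PartialBijections.
Variables (Y : Type) (X : set Y).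

Lemma IX_eq (f g : IX X) : (forall a, proj1_sig f a = proj1_sig g a) -> f = g.
Proof.
  destruct f as [f pf], g as [g pg]; simpl; intros H.
  assert (f = g) by (apply functional_extensionality; auto); subst g.
  f_equal; apply proof_irrelevance.
Qed.

Lemma IX_in (f : IX X) (a b : Y) : proj1_sig f a = Some b -> X a /\ X b.
Proof. exact (proj1 (proj2_sig f) a b). Qed.

Lemma IX_inj (f : IX X) (a a' b : Y) :
  proj1_sig f a = Some b -> proj1_sig f a' = Some b -> a = a'.
Proof. exact (proj2 (proj2_sig f) a a' b). Qed.

Lemma pinv_some (f : IX X) (a b : Y) :
  proj1_sig (pinv f) b = Some a <-> proj1_sig f a = Some b.
Proof. apply pinv_fun_some; exact (IX_inj f). Qed.

Lemma pinv_pinv (f : IX X) : pinv (pinv f) = f.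
Proof.
  apply IX_eq; intros a; destruct (proj1_sig f a) as [b|] eqn:E.
  - apply pinv_some, pinv_some; exact E.
  - apply pinv_fun_none; intros c Ec.
    apply (pinv_some f) in Ec; congruence.
Qed.

Lemma pmul_some (f g : IX X) (a c : Y) :
  proj1_sig (pmul f g) a = Some c <->
  exists b, proj1_sig g a = Some b /\ proj1_sig f b = Some c.
Proof.
  simpl; unfold pcomp_fun; destruct (proj1_sig g a) as [b|]; split.
  - eauto.
  - intros [b' [E H]]; congruence.
  - discriminate.
  - intros [b' [E _]]; discriminate.
Qed.

Lemma pmul_none (f g : IX X) (a : Y) :
  proj1_sig (pmul f g) a = None <->
  proj1_sig g a = None \/ exists b, proj1_sig g a = Some b /\ proj1_sig f b = None.
Proof.
  simpl; unfold pcomp_fun; destruct (proj1_sig g a) as [b|]; split.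
  - eauto.
  - intros [E|[b' [E H]]]; congruence.
  - auto.
  - auto.
Qed.

Lemma pmul_avoid (f g : IX X) (y : Y) :
  (forall a, proj1_sig (pmul f g) a <> Some y) <->
  (forall b, proj1_sig f b <> Some y) \/
  (exists b, proj1_sig f b = Some y /\ forall a, proj1_sig g a <> Some b).
Proof.
  split.
  - intros K; destruct (classic (exists b, proj1_sig f b = Some y)) as [[b Hb]|N].
    + right; exists b; split; auto.
      intros a Ea; apply (K a), pmul_some; eauto.
    + left; intros b Hb; eauto.
  - intros [Hf|[b [Hb Hg]]] a Ea; apply pmul_some in Ea; destruct Ea as [c [Ec Fc]].
    + exact (Hf c Fc).
    + rewrite (IX_inj f _ _ _ Fc Hb) in Ec; exact (Hg a Ec).
Qed.
End PartialBijections.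

Arguments IX_eq {Y X}.
Arguments IX_in {Y X}.
Arguments IX_inj {Y X}.
Arguments pinv_some {Y X}.
Arguments pinv_pinv {Y X}.
Arguments pmul_some {Y X}.
Arguments pmul_none {Y X}.
Arguments pmul_avoid {Y X}.

Section TauPP.
Variables (Y : Type) (X : set Y).

Lemma tau_pp_is_topology : is_topology (tau_pp X).
Proof. apply generated_is_topology. Qed.

(** [v_set X x y] is subbasic when [x, y] lie in [X], and empty otherwise. *)
Lemma v_set_open (x y : Y) : tau_pp X (v_set X x y).
Proof.
  destruct (classic (X x /\ X y)) as [[Hx Hy]|N].
  - apply generated_subbase_open; left; eauto.
  - apply (open_ext _ _ _ (open_empty tau_pp_is_topology)); intros f; split.
    + intros [].
    + intros E; apply N; exact (IX_in f _ _ E).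
Qed.

(** [w1_set X x] is subbasic when [x] lies in [X], and everything otherwise. *)
Lemma w1_set_open (x : Y) : tau_pp X (w1_set X x).
Proof.
  destruct (classic (X x)) as [Hx|N].
  - apply generated_subbase_open; right; left; eauto.
  - apply (open_ext _ _ _ (open_full tau_pp_is_topology)); intros f; split; auto.
    intros _; unfold w1_set; destruct (proj1_sig f x) as [b|] eqn:E; auto.
    destruct (N (proj1 (IX_in f _ _ E))).
Qed.

(** [w2_set X y] is subbasic when [y] lies in [X], and everything otherwise. *)
Lemma w2_set_open (y : Y) : tau_pp X (w2_set X y).
Proof.
  destruct (classic (X y)) as [Hy|N].
  - apply generated_subbase_open; right; right; eauto.
  - apply (open_ext _ _ _ (open_full tau_pp_is_topology)); intros f; split; auto.
    intros _ a E; exact (N (proj2 (IX_in f _ _ E))).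
Qed.

Lemma continuous_into_tau_pp {A : Type} (OA : set (set A)) (phi : A -> IX X) :
  is_topology OA ->
  (forall x y, X x -> X y -> OA (fun a => v_set X x y (phi a))) ->
  (forall x, X x -> OA (fun a => w1_set X x (phi a))) ->
  (forall y, X y -> OA (fun a => w2_set X y (phi a))) ->
  continuous OA (tau_pp X) phi.
Proof.
  intros HA Hv Hw1 Hw2; apply continuous_into_generated; auto.
  intros V [[x [y [Hx [Hy ->]]]] | [[x [Hx ->]] | [y [Hy ->]]]]; auto.
Qed.

Lemma tau_pp_hausdorff : hausdorff (tau_pp X).
Proof.
  intros f g Hfg.
  assert (Hx : exists x, proj1_sig f x <> proj1_sig g x).
  { apply NNPP; intros N; apply Hfg, IX_eq; intros a.
    apply NNPP; intros K; apply N; eauto. }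
  destruct Hx as [x Hx].
  destruct (proj1_sig f x) as [y|] eqn:Ef; destruct (proj1_sig g x) as [y'|] eqn:Eg.
  - exists (v_set X x y), (v_set X x y').
    repeat split; auto using v_set_open.
    unfold v_set; intros h E1 E2; congruence.
  - exists (v_set X x y), (w1_set X x).
    repeat split; auto using v_set_open, w1_set_open.
    unfold v_set, w1_set; intros h E1 E2; congruence.
  - exists (w1_set X x), (v_set X x y').
    repeat split; auto using v_set_open, w1_set_open.
    unfold v_set, w1_set; intros h E1 E2; congruence.
  - congruence.
Qed.

(** Preimages of subbasic sets under multiplication are unions of open
    rectangles, by [pmul_some], [pmul_none] and [pmul_avoid]. *)
Lemma tau_pp_pmul_continuous :
  continuous (product_topology (tau_pp X) (tau_pp X)) (tau_pp X)
    (fun p => pmul (fst p) (snd p)).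
Proof.
  pose proof tau_pp_is_topology as HT.
  assert (HP : is_topology (product_topology (tau_pp X) (tau_pp X)))
    by apply generated_is_topology.
  apply continuous_into_tau_pp; [exact HP | ..].
  - intros x y _ _.
    apply (open_ext _ (fun p => exists z, True /\
             (v_set X z y (fst p) /\ v_set X x z (snd p)))).
    + apply (open_union HP); intros z _.
      apply product_rectangle_open; apply v_set_open.
    + intros [f g]; unfold v_set; simpl fst; simpl snd; rewrite pmul_some.
      split; intros [z Hz]; exists z; tauto.
  - intros x _.
    apply (open_ext _ (fun p => (True /\ w1_set X x (snd p)) \/ exists z, True /\
             (w1_set X z (fst p) /\ v_set X x z (snd p)))).
    + apply (open_union2 HP).
      * exact (product_rectangle_open _ _ (fun _ => True) _ (open_full HT) (w1_set_open x)).
      * apply (open_union HP); intros z _.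
        apply product_rectangle_open; [apply w1_set_open | apply v_set_open].
    + intros [f g]; unfold v_set, w1_set; simpl fst; simpl snd; rewrite pmul_none.
      split; (intros [Hg|[z Hz]]; [left; tauto | right; exists z; tauto]).
  - intros y _.
    apply (open_ext _ (fun p => (w2_set X y (fst p) /\ True) \/ exists z, True /\
             (v_set X z y (fst p) /\ w2_set X z (snd p)))).
    + apply (open_union2 HP).
      * exact (product_rectangle_open _ _ _ (fun _ => True) (w2_set_open y) (open_full HT)).
      * apply (open_union HP); intros z _.
        apply product_rectangle_open; [apply v_set_open | apply w2_set_open].
    + intros [f g]; unfold v_set, w2_set; simpl fst; simpl snd; rewrite pmul_avoid.
      split; (intros [Hf|[z Hz]]; [left; tauto | right; exists z; tauto]).
Qed.

(** Inversion exchanges [v_set X x y] with [v_set X y x] and [w1_set] with [w2_set]. *)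
Lemma tau_pp_pinv_continuous : continuous (tau_pp X) (tau_pp X) (@pinv Y X).
Proof.
  apply continuous_into_tau_pp; [exact tau_pp_is_topology | ..].
  - intros x y _ _; apply (open_ext _ _ _ (v_set_open y x)); intros f.
    unfold v_set; rewrite pinv_some; tauto.
  - intros x _; apply (open_ext _ _ _ (w2_set_open x)); intros f.
    unfold w1_set, w2_set; simpl; rewrite pinv_fun_none; tauto.
  - intros y _; apply (open_ext _ _ _ (w1_set_open y)); intros f.
    unfold w1_set, w2_set; split.
    + intros E a Ea; apply (pinv_some f) in Ea; congruence.
    + intros K; destruct (proj1_sig f y) as [b|] eqn:E; auto.
      destruct (K b); apply pinv_some; exact E.
Qed.
End TauPP.

Section Restriction.
Variables (Y : Type) (X : set Y).

Lemma pointwise_subbase_open (y z : Y) : pointwise_top (fun s => pfun s y = z).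
Proof. apply generated_subbase_open; exists y, z; tauto. Qed.

Lemma hat_some (s : perm Y) (a b : Y) :
  proj1_sig (hat X s) a = Some b <-> X a /\ X b /\ pfun s a = b.
Proof.
  simpl; unfold hat_fun; destruct (excluded_middle_informative _) as [[Ha Hb]|N]; split.
  - intros E; injection E as <-; auto.
  - intros [_ [_ <-]]; reflexivity.
  - discriminate.
  - intros [Ha [Hb <-]]; tauto.
Qed.

Lemma hat_none (s : perm Y) (a : Y) :
  proj1_sig (hat X s) a = None <-> ~ (X a /\ X (pfun s a)).
Proof.
  simpl; unfold hat_fun; destruct (excluded_middle_informative _) as [H|N]; split.
  - discriminate.
  - tauto.
  - auto.
  - auto.
Qed.

(** For [x, y] in [X]: [hat s] is undefined at [x] iff [s x] leaves [X], and
    [y] is outside the image of [hat s] iff [s^-1 y] lies outside [X]. *)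
Lemma hat_continuous : continuous (@pointwise_top Y) (tau_pp X) (hat X).
Proof.
  assert (HT : is_topology (@pointwise_top Y)) by apply generated_is_topology.
  apply continuous_into_tau_pp; auto.
  - intros x y Hx Hy; apply (open_ext _ _ _ (pointwise_subbase_open x y)); intros s.
    unfold v_set; rewrite hat_some; intuition congruence.
  - intros x Hx.
    apply (open_ext _ (fun s => exists z, ~ X z /\ pfun s x = z)).
    + apply (open_union HT); intros z _; apply pointwise_subbase_open.
    + intros s; unfold w1_set; rewrite hat_none; split.
      * intros [z [Hz <-]]; tauto.
      * intros N; exists (pfun s x); tauto.
  - intros y Hy.
    apply (open_ext _ (fun s => exists a, ~ X a /\ pfun s a = y)).
    + apply (open_union HT); intros a _; apply pointwise_subbase_open.
    + intros s; unfold w2_set; split.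
      * intros [a [Ha Ea]] a' E'; apply hat_some in E'; destruct E' as [Ha' [_ Es]].
        assert (a = a') by (rewrite <- (pfunK s a), <- (pfunK s a'); congruence).
        subst a'; contradiction.
      * intros K; exists (pinvfun s y); split; [|apply pinvfunK].
        intros Ha; apply (K (pinvfun s y)), hat_some; rewrite pinvfunK; auto.
Qed.
End Restriction.

Arguments hat_some {Y X}.
Arguments hat_none {Y X}.

(** The
    subbasic sets are detected by continuous maps built from multiplication,
    inversion and the matrix units [e_xy = {x |-> y}], each taking only two
    distinct values, so [hausdorff_two_valued_open] applies. *)
Section Minimality.
Variables (Y : Type) (X : set Y).

Definition unit_fun (x y : Y) : Y -> option Y :=
  fun a => if excluded_middle_informative (a = x) then Some y else None.

Lemma unit_pbij (x y : Y) : X x -> X y -> is_pbij X (unit_fun x y).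
Proof.
  intros Hx Hy; unfold unit_fun; split.
  - intros a b; destruct (excluded_middle_informative _) as [->|_]; [|discriminate].
    intros E; injection E as <-; auto.
  - intros a a' b.
    destruct (excluded_middle_informative (a = x)) as [->|_]; [|discriminate].
    destruct (excluded_middle_informative (a' = x)) as [->|_]; [auto|discriminate].
Qed.

Definition matrix_unit (x y : Y) (Hx : X x) (Hy : X y) : IX X :=
  exist _ (unit_fun x y) (unit_pbij x y Hx Hy).

Lemma empty_pbij : is_pbij X (fun _ => None).
Proof. split; discriminate. Qed.

Definition zero : IX X := exist _ (fun _ => None) empty_pbij.

Lemma matrix_unit_nonzero (x y : Y) (Hx : X x) (Hy : X y) : matrix_unit x y Hx Hy <> zero.
Proof.
  intros E; assert (Ex := f_equal (fun f => proj1_sig f x) E); simpl in Ex.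
  unfold unit_fun in Ex; destruct (excluded_middle_informative (x = x)); congruence.
Qed.

Variable tau : set (set (IX X)).
Hypotheses (Htop : is_topology tau) (Hhaus : hausdorff tau)
  (Htis : topological_inverse_semigroup tau).

Lemma continuous_pmul_of (p q : IX X -> IX X) :
  continuous tau tau p -> continuous tau tau q ->
  continuous tau tau (fun f => pmul (p f) (q f)).
Proof.
  intros Hp Hq V HV.
  exact (continuous_pair tau tau tau p q Htop Hp Hq _ (proj1 Htis V HV)).
Qed.

Lemma continuous_pinv_of (p : IX X -> IX X) :
  continuous tau tau p -> continuous tau tau (fun f => pinv (p f)).
Proof. intros Hp V HV; exact (Hp _ (proj2 Htis V HV)). Qed.

Lemma continuous_id : continuous tau tau (fun f => f).
Proof. intros V HV; exact HV. Qed.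

Lemma continuous_const (c : IX X) : continuous tau tau (fun _ => c).
Proof. intros V _; exact (open_decide Htop (V c)). Qed.

(** [e_yy f e_xx] is [e_xy] if [f x = y] and zero otherwise. *)
Lemma v_set_open_in (x y : Y) (Hx : X x) (Hy : X y) : tau (v_set X x y).
Proof.
  apply (hausdorff_two_valued_open
           (fun f => pmul (matrix_unit y y Hy Hy) (pmul f (matrix_unit x x Hx Hx)))
           (matrix_unit x y Hx Hy) zero); auto using matrix_unit_nonzero.
  - apply continuous_pmul_of; [apply continuous_const|].
    apply continuous_pmul_of; [apply continuous_id | apply continuous_const].
  - intros f E; apply IX_eq; intros a; unfold v_set in E; simpl; unfold pcomp_fun, unit_fun.
    destruct (excluded_middle_informative (a = x)) as [->|_]; auto.
    rewrite E; destruct (excluded_middle_informative (y = y)); tauto.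
  - intros f E; apply IX_eq; intros a; unfold v_set in E; simpl; unfold pcomp_fun, unit_fun.
    destruct (excluded_middle_informative (a = x)) as [->|_]; auto.
    destruct (proj1_sig f x) as [c|]; auto.
    destruct (excluded_middle_informative (c = y)); subst; tauto.
Qed.

(** [f^-1 f e_xx] is zero if [x] is outside the domain of [f], and [e_xx] otherwise. *)
Lemma w1_set_open_in (x : Y) (Hx : X x) : tau (w1_set X x).
Proof.
  apply (hausdorff_two_valued_open
           (fun f => pmul (pinv f) (pmul f (matrix_unit x x Hx Hx)))
           zero (matrix_unit x x Hx Hx)); auto.
  - apply continuous_pmul_of; [apply continuous_pinv_of, continuous_id|].
    apply continuous_pmul_of; [apply continuous_id | apply continuous_const].
  - intros E; symmetry in E; exact (matrix_unit_nonzero _ _ _ _ E).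
  - intros f E; apply IX_eq; intros a; unfold w1_set in E; simpl; unfold pcomp_fun, unit_fun.
    destruct (excluded_middle_informative (a = x)) as [->|_]; auto.
    rewrite E; reflexivity.
  - intros f E; apply IX_eq; intros a; unfold w1_set in E; simpl; unfold pcomp_fun, unit_fun.
    destruct (excluded_middle_informative (a = x)) as [->|_]; auto.
    destruct (proj1_sig f x) as [c|] eqn:Ec; [|tauto].
    apply (pinv_some f); exact Ec.
Qed.

(** [e_yy f f^-1] is zero if [y] is outside the image of [f], and [e_yy] otherwise. *)
Lemma w2_set_open_in (y : Y) (Hy : X y) : tau (w2_set X y).
Proof.
  apply (hausdorff_two_valued_open
           (fun f => pmul (matrix_unit y y Hy Hy) (pmul f (pinv f)))
           zero (matrix_unit y y Hy Hy)); auto.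
  - apply continuous_pmul_of; [apply continuous_const|].
    apply continuous_pmul_of; [apply continuous_id | apply continuous_pinv_of, continuous_id].
  - intros E; symmetry in E; exact (matrix_unit_nonzero _ _ _ _ E).
  - intros f E; apply IX_eq; intros a; unfold w2_set in E; simpl; unfold pcomp_fun, unit_fun.
    destruct (pinv_fun (proj1_sig f) a) as [b|] eqn:Eb; auto.
    apply (pinv_some f) in Eb; rewrite Eb.
    destruct (excluded_middle_informative (a = y)) as [->|_]; auto.
    destruct (E b Eb).
  - intros f E; apply IX_eq; intros a; unfold w2_set in E; simpl; unfold pcomp_fun, unit_fun.
    destruct (pinv_fun (proj1_sig f) a) as [b|] eqn:Eb.
    + apply (pinv_some f) in Eb; rewrite Eb; reflexivity.
    + destruct (excluded_middle_informative (a = y)) as [->|_]; auto.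
      destruct E; intros b Hb; exact (proj1 (pinv_fun_none _ _) Eb b Hb).
Qed.

Lemma tau_pp_coarsest (U : set (IX X)) : tau_pp X U -> tau U.
Proof.
  apply (continuous_into_tau_pp Y X tau (fun f => f) Htop);
    auto using v_set_open_in, w1_set_open_in, w2_set_open_in.
Qed.
End Minimality.

(** The permutation [extend f] follows [f] on its domain,
    sends the rest of [X] out along [h], sends [h b] back to [f^-1 b] when [b]
    lies in the image of [f] (through [h]) and to [b] otherwise, and fixes
    every other point. *)
Section Extension.
Variables (Y : Type) (X : set Y) (h : Y -> Y).
Hypotheses (h_out : forall x, X x -> ~ X (h x))
  (h_inj : forall x x', X x -> X x' -> h x = h x' -> x = x').

Definition h_inv : Y -> option Y :=
  pinv_fun (fun b => if excluded_middle_informative (X b) then Some (h b) else None).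

Lemma h_inv_some (a b : Y) : h_inv a = Some b <-> X b /\ h b = a.
Proof.
  unfold h_inv; rewrite pinv_fun_some.
  - destruct (excluded_middle_informative (X b)); split.
    + intros E; injection E; auto.
    + intros [_ <-]; reflexivity.
    + discriminate.
    + tauto.
  - intros c c' d.
    destruct (excluded_middle_informative (X c)) as [Hc|]; [|discriminate].
    destruct (excluded_middle_informative (X c')) as [Hc'|]; [|discriminate].
    intros E E'; apply h_inj; congruence.
Qed.

Definition ext_fun (f : IX X) (a : Y) : Y :=
  if excluded_middle_informative (X a) then
    match proj1_sig f a with Some b => b | None => h a end
  else match h_inv a with
       | Some b => match proj1_sig (pinv f) b with Some c => h c | None => b end
       | None => a
       end.

Lemma ext_on_X (f : IX X) (a : Y) :
  X a -> ext_fun f a = match proj1_sig f a with Some b => b | None => h a end.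
Proof. intros Ha; unfold ext_fun; destruct (excluded_middle_informative (X a)); tauto. Qed.

Lemma ext_on_image (f : IX X) (b : Y) :
  X b -> ext_fun f (h b) = match proj1_sig (pinv f) b with Some c => h c | None => b end.
Proof.
  intros Hb; unfold ext_fun.
  destruct (excluded_middle_informative (X (h b))) as [K|_]; [destruct (h_out b Hb K)|].
  rewrite (proj2 (h_inv_some (h b) b) (conj Hb eq_refl)); reflexivity.
Qed.

Lemma ext_elsewhere (f : IX X) (a : Y) :
  ~ X a -> ~ (exists b, X b /\ h b = a) -> ext_fun f a = a.
Proof.
  intros Ha N; unfold ext_fun.
  destruct (excluded_middle_informative (X a)); [contradiction|].
  destruct (h_inv a) as [b|] eqn:E; auto.
  apply h_inv_some in E; destruct N; eauto.
Qed.

Lemma ext_fun_inv_l (f : IX X) (a : Y) : ext_fun (pinv f) (ext_fun f a) = a.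
Proof.
  destruct (classic (X a)) as [Ha|Ha].
  - rewrite (ext_on_X f a Ha); destruct (proj1_sig f a) as [b|] eqn:E.
    + rewrite (ext_on_X _ b (proj2 (IX_in f _ _ E))).
      rewrite (proj2 (pinv_some f a b) E); reflexivity.
    + rewrite (ext_on_image _ a Ha), pinv_pinv, E; reflexivity.
  - destruct (classic (exists b, X b /\ h b = a)) as [[b [Hb <-]]|N].
    + rewrite (ext_on_image f b Hb); destruct (proj1_sig (pinv f) b) as [c|] eqn:E.
      * apply (pinv_some f) in E.
        rewrite (ext_on_image _ c (proj1 (IX_in f _ _ E))), pinv_pinv, E; reflexivity.
      * rewrite (ext_on_X _ b Hb), E; reflexivity.
    + rewrite (ext_elsewhere f a Ha N), ext_elsewhere; auto.
Qed.

Lemma ext_fun_inv_r (f : IX X) (a : Y) : ext_fun f (ext_fun (pinv f) a) = a.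
Proof. pose proof (ext_fun_inv_l (pinv f) a) as E; rewrite pinv_pinv in E; exact E. Qed.

Definition extend (f : IX X) : perm Y :=
  Perm (ext_fun f) (ext_fun (pinv f)) (ext_fun_inv_l f) (ext_fun_inv_r f).

Lemma hat_extend (f : IX X) : hat X (extend f) = f.
Proof.
  apply IX_eq; intros a; destruct (proj1_sig f a) as [b|] eqn:E.
  - destruct (IX_in f _ _ E) as [Ha Hb].
    apply hat_some; simpl; rewrite (ext_on_X f a Ha), E; auto.
  - apply hat_none; simpl; intros [Ha Hs].
    rewrite (ext_on_X f a Ha), E in Hs; exact (h_out a Ha Hs).
Qed.

(** At a point [y] of [X], [extend f y = z] iff [f y = z], or [f] is undefined
    at [y] and [z = h y]. *)
Lemma ext_preimage_open_on_X (y z : Y) :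
  X y -> tau_pp X (fun f => ext_fun f y = z).
Proof.
  intros Hy; pose proof (tau_pp_is_topology Y X) as HT.
  apply (open_ext _ _ _ (open_union2 HT _ _ (v_set_open Y X y z)
           (open_inter HT _ _ (open_decide HT (h y = z)) (w1_set_open Y X y)))).
  intros f; rewrite (ext_on_X f y Hy); unfold v_set, w1_set.
  destruct (proj1_sig f y); intuition congruence.
Qed.

(** At [h b], [extend f (h b) = z] iff [z = h c] with [f c = b], or [b] is
    outside the image of [f] and [z = b]. *)
Lemma ext_preimage_open_on_image (b z : Y) :
  X b -> tau_pp X (fun f => ext_fun f (h b) = z).
Proof.
  intros Hb; pose proof (tau_pp_is_topology Y X) as HT.
  apply (open_ext _ _ _ (open_union2 HT _ _
           (open_union HT (fun c => X c /\ h c = z) (fun c => v_set X c b)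
              (fun c _ => v_set_open Y X c b))
           (open_inter HT _ _ (open_decide HT (b = z)) (w2_set_open Y X b)))).
  intros f; symmetry; rewrite (ext_on_image f b Hb); unfold v_set, w2_set.
  destruct (proj1_sig (pinv f) b) as [c|] eqn:E; split.
  - apply (pinv_some f) in E; intros <-.
    left; exists c; repeat split; auto; exact (proj1 (IX_in f _ _ E)).
  - apply (pinv_some f) in E; intros [[c' [[_ <-] Fc']] | [_ W]].
    + f_equal; exact (IX_inj f _ _ _ E Fc').
    + destruct (W c E).
  - intros <-; right; split; auto.
    intros a Fa; apply (pinv_some f) in Fa; congruence.
  - intros [[c [_ Fc]] | [Ez _]]; auto.
    apply (pinv_some f) in Fc; congruence.
Qed.

Lemma extend_continuous : continuous (tau_pp X) (@pointwise_top Y) extend.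
Proof.
  apply continuous_into_generated; [exact (tau_pp_is_topology Y X)|].
  intros V [y [z HV]].
  apply (open_ext _ (fun f => ext_fun f y = z)); [|intros f; rewrite HV; tauto].
  destruct (classic (X y)) as [Hy|Hy]; [exact (ext_preimage_open_on_X y z Hy)|].
  destruct (classic (exists b, X b /\ h b = y)) as [[b [Hb <-]]|N].
  - exact (ext_preimage_open_on_image b z Hb).
  - apply (open_ext _ _ _ (open_decide (tau_pp_is_topology Y X) (y = z))).
    intros f; rewrite ext_elsewhere; tauto.
Qed.
End Extension.

Theorem theorem6p3 (Y : Type) (X : set Y) (hXY : card_le_compl X) :
  (hausdorff (tau_pp X) /\
   topological_inverse_semigroup (tau_pp X) /\
   continuous ((@pointwise_top Y)) (tau_pp X) (hat X)) /\
  (forall tau : set (set (IX X)),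
     is_topology tau -> hausdorff tau ->
     topological_inverse_semigroup tau ->
     continuous ((@pointwise_top Y)) tau (hat X) ->
     forall U, tau U <-> tau_pp X U).
Proof.
  destruct hXY as [h [h_out h_inj]].
  split.
  - repeat split.
    + apply tau_pp_hausdorff.
    + apply tau_pp_pmul_continuous.
    + apply tau_pp_pinv_continuous.
    + apply hat_continuous.
  - intros tau Htop Hhaus Htis Hhat U; split.
    + (* U = extend^-1 (hat^-1 U), since hat is a left inverse of extend *)
      intros HU.
      apply (open_ext _ _ _ (extend_continuous Y X h h_out h_inj _ (Hhat U HU))).
      intros f; simpl; rewrite hat_extend; tauto.
    + apply tau_pp_coarsest; auto.
Qed.
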